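(* For a weighted cycle $\mathcal{C}_N$ with $N$ odd, \[ h(k)+\overline{h}(k)=1\quad\text{for }2\leq k\leq N. \]
   Context: A weighted cycle $\mathcal{C}_N$ ($N\geq3$) has vertices $v_1,\ldots,v_N$ and edges exactly $\{v_i,v_{i+1}\}$ (indices mod $N$), each with positive symmetric weight $w_{uv}$ ($w_{uv}=0$ for non-edges). $d_u=\sum_vw_{uv}$, $|E(A,B)|:=\sum_{u\in A,v\in B}w_{uv}$, $\mathrm{vol}(A)=\sum_{u\in A}d_u$, $\overline{A}$ the complement. For nonempty $S$, $\phi(S)=|E(S,\overline{S})|/\mathrm{vol}(S)$; $h(k):=\min\max_{1\leq i\leq k}\phi(S_i)$ over all collections of $k$ nonempty pairwise disjoint vertex subsets. For disjoint $V_1,V_2$ with $V_1\cup V_2\neq\emptyset$, $\overline{\phi}(V_1,V_2)=2|E(V_1,V_2)|/\mathrm{vol}(V_1\cup V_2)$; $\overline{h}(k):=\max\min_{1\leq i\leq k}\overline{\phi}(V_{2i-1},V_{2i})$ over all collections of $k$ pairs $(V_1,V_2),\ldots,(V_{2k-1},V_{2k})$ of pairwise disjoint vertex subsets with $V_{2i-1}\cup V_{2i}\neq\emptyset$ for each $i$. *)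

From HB Require Import structures.
From mathcomp Require Import all_boot all_order all_algebra.
Set Implicit Arguments. Unset Strict Implicit. Unset Printing Implicit Defensive.
Import Order.TTheory GRing.Theory Num.Theory.
Local Open Scope ring_scope.

Section Cycle.
Variables (R : realFieldType) (N : nat) (w : 'I_N -> R).

(* Weighted cycle on vertices 'I_N (vertex i = v_{i+1}); w i is the weight of
   the edge {i, i+1 mod N}.  wt u v is the symmetric weight w_{uv}. *)
Definition wt (u v : 'I_N) : R :=
  if (u.+1 %% N == v)%N then w u
  else if (v.+1 %% N == u)%N then w v else 0.

Definition deg (u : 'I_N) : R := \sum_(v : 'I_N) wt u v.

Definition cutE (A B : {set 'I_N}) : R :=
  \sum_(u in A) \sum_(v in B) wt u v.

Definition vol (A : {set 'I_N}) : R := \sum_(u in A) deg u.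

Definition phi (S : {set 'I_N}) : R := cutE S (~: S) / vol S.

Definition phibar (V1 V2 : {set 'I_N}) : R :=
  2 * cutE V1 V2 / vol (V1 :|: V2).

Definition admissible k (S : {ffun 'I_k -> {set 'I_N}}) : bool :=
  [forall i, S i != set0] &&
  [forall i, forall j, (i != j) ==> [disjoint S i & S j]].

Definition admissible_pairs k
    (P : {ffun 'I_k -> {set 'I_N} * {set 'I_N}}) : bool :=
  [forall i, [disjoint (P i).1 & (P i).2]] &&
  [forall i, ((P i).1 :|: (P i).2) != set0] &&
  [forall i, forall j, (i != j) ==>
     [disjoint ((P i).1 :|: (P i).2) & ((P j).1 :|: (P j).2)]].

(* The sentinels 1 (for min) and 0 (for max) are harmless since
   0 <= phi <= 1 on nonempty sets and admissible collections exist for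
   1 <= k <= N. *)
Definition h k : R :=
  \big[Num.min/1]_(S : {ffun 'I_k -> {set 'I_N}} | admissible S)
     \big[Num.max/0]_(i < k) phi (S i).

(* hbar(k) = max over admissible pair collections of min_i phibar; sentinels
   0 (max) and 1 (min) are harmless since 0 <= phibar <= 1. *)
Definition hbar k : R :=
  \big[Num.max/0]_(P : {ffun 'I_k -> {set 'I_N} * {set 'I_N}}
                    | admissible_pairs P)
     \big[Num.min/1]_(i < k) phibar (P i).1 (P i).2.

End Cycle.

From HB Require Import structures.
From mathcomp Require Import all_boot all_order all_algebra.
From mathcomp Require Import zify ring lra.
Import Order.TTheory GRing.Theory Num.Theory.
Local Open Scope ring_scope.
Set Implicit Arguments. Unset Strict Implicit.

(* Writing S = V1 ∪ V2, one has
   vol S = |E(S, ~S)| + |E(V1,V1)| + |E(V2,V2)| + 2|E(V1,V2)|,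
   hence phibar(V1, V2) + phi(S) <= 1 with equality iff V1 and V2 span no edge.
   This gives hbar(k) <= 1 - h(k).  Conversely, for k >= 2 every set of a disjoint
   collection misses some vertex m, so it induces a union of paths of the cycle;
   colouring its vertices by the parity of their distance from m splits it into two
   sets spanning no edge, whence h(k) >= 1 - hbar(k). *)

Section MinMaxSentinels.
Variable R : realDomainType.

Lemma bigmax_add_bigmin_le1 (I : finType) (F G : I -> R) :
  (forall i, F i + G i <= 1) ->
  \big[Num.max/0]_i F i + \big[Num.min/1]_i G i <= 1.
Proof.
move=> FG; rewrite -lerBrDr; apply: bigmax_le => [|i _].
  by rewrite subr_ge0 bigmin_le_id.
by rewrite lerBrDr; apply: le_trans _ (FG i); rewrite lerD2l bigmin_le_cond.
Qed.

Lemma bigmax_add_bigmin_ge1 (I : finType) (F G : I -> R) :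
  (forall i, 1 <= F i + G i) ->
  1 <= \big[Num.max/0]_i F i + \big[Num.min/1]_i G i.
Proof.
move=> FG; rewrite -lerBlDl; apply: le_bigmin => [|i _].
  by rewrite lerBlDl lerDr bigmax_ge_id.
by rewrite lerBlDl; apply: (le_trans (FG i)); rewrite lerD2r le_bigmax_cond.
Qed.

Lemma bigmin_add_bigmax_le1 (A B : finType) (pA : pred A) (pB : pred B)
    (f : A -> R) (g : B -> R) :
  (forall b, pB b -> exists2 a, pA a & f a + g b <= 1) ->
  \big[Num.min/1]_(a | pA a) f a + \big[Num.max/0]_(b | pB b) g b <= 1.
Proof.
move=> fg; rewrite -lerBrDl; apply: bigmax_le => [|b /fg [a pAa le_fg]].
  by rewrite subr_ge0 bigmin_le_id.
rewrite lerBrDl; apply: le_trans _ le_fg; rewrite lerD2r.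
exact: bigmin_le_cond.
Qed.

Lemma bigmin_add_bigmax_ge1 (A B : finType) (pA : pred A) (pB : pred B)
    (f : A -> R) (g : B -> R) :
  (forall a, pA a -> exists2 b, pB b & 1 <= f a + g b) ->
  1 <= \big[Num.min/1]_(a | pA a) f a + \big[Num.max/0]_(b | pB b) g b.
Proof.
move=> fg; rewrite -lerBlDr; apply: le_bigmin => [|a /fg [b pBb le_fg]].
  by rewrite lerBlDr lerDl bigmax_ge_id.
rewrite lerBlDr; apply: (le_trans le_fg); rewrite lerD2l.
exact: le_bigmax_cond.
Qed.

End MinMaxSentinels.

Section WeightedCycle.
Variables (R : realFieldType) (N : nat) (w : 'I_N -> R).
Hypothesis N_ge3 : (3 <= N)%N.
Hypothesis w_gt0 : forall i, 0 < w i.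

(* For N = 2 the two edges {0,1} and {1,0} would carry different weights. *)
Lemma wt_sym u v : wt w u v = wt w v u.
Proof.
rewrite /wt; case: eqP => e1; case: eqP => e2 //; exfalso; move: e1 e2.
have ltu := ltn_ord u; have ltv := ltn_ord v.
case: (ltnP u.+1 N) => hu; case: (ltnP v.+1 N) => hv.
- rewrite !modn_small //; lia.
- have -> : v.+1 = N by lia. rewrite modnn modn_small //; lia.
- have -> : u.+1 = N by lia. rewrite modnn modn_small //; lia.
- have -> : u.+1 = N by lia. have -> : v.+1 = N by lia. rewrite modnn; lia.
Qed.

Lemma wt_ge0 u v : 0 <= wt w u v.
Proof. by rewrite /wt; case: ifP => _; [|case: ifP => _]; rewrite // ltW. Qed.

Lemma deg_gt0 u : 0 < deg w u.
Proof.
pose v := Ordinal (ltn_pmod u.+1 (leq_ltn_trans (leq0n u) (ltn_ord u))).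
rewrite /deg (bigD1 v) //= ltr_wpDr ?sumr_ge0 // => [x _|]; first exact: wt_ge0.
by rewrite /wt eqxx.
Qed.

Lemma vol_gt0 (S : {set 'I_N}) : S != set0 -> 0 < vol w S.
Proof.
case/set0Pn => x xS; rewrite /vol (bigD1 x) //= ltr_wpDr ?deg_gt0 //.
by apply: sumr_ge0 => u _; rewrite ltW ?deg_gt0.
Qed.

Lemma cutE_ge0 (A B : {set 'I_N}) : 0 <= cutE w A B.
Proof. by apply: sumr_ge0 => u _; apply: sumr_ge0 => v _; apply: wt_ge0. Qed.

Lemma cutEC (A B : {set 'I_N}) : cutE w A B = cutE w B A.
Proof.
rewrite /cutE exchange_big; apply: eq_bigr => u _.
by apply: eq_bigr => v _; apply: wt_sym.
Qed.

Lemma cutEUl (A B C : {set 'I_N}) :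
  [disjoint A & B] -> cutE w (A :|: B) C = cutE w A C + cutE w B C.
Proof.
by move=> dAB; rewrite /cutE (eq_bigl [predU A & B]) ?bigU // => x; rewrite inE.
Qed.

Lemma cutEUr (A B C : {set 'I_N}) :
  [disjoint A & B] -> cutE w C (A :|: B) = cutE w C A + cutE w C B.
Proof. by move=> dAB; rewrite cutEC cutEUl // !(cutEC C). Qed.

Lemma vol_cutE (S : {set 'I_N}) : vol w S = cutE w S S + cutE w S (~: S).
Proof.
rewrite /vol /cutE -big_split; apply: eq_bigr => u _.
rewrite /deg (bigID (fun v => v \in S)) /=; congr (_ + _).
by apply: eq_bigl => v; rewrite inE.
Qed.

Lemma phibar_phi_defect (V1 V2 : {set 'I_N}) :
  [disjoint V1 & V2] -> V1 :|: V2 != set0 ->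
  1 - phi w (V1 :|: V2) - phibar w V1 V2
    = (cutE w V1 V1 + cutE w V2 V2) / vol w (V1 :|: V2).
Proof.
move=> dV /vol_gt0/lt0r_neq0 vol_neq0.
have := vol_cutE (V1 :|: V2).
rewrite cutEUl // !cutEUr // (cutEC V2 V1) /phi /phibar => vol_eq.
apply: (mulIf vol_neq0); rewrite !mulrBl mul1r !divfK // {1}vol_eq; ring.
Qed.

Lemma phi_add_phibar_le1 (V1 V2 : {set 'I_N}) :
  [disjoint V1 & V2] -> V1 :|: V2 != set0 ->
  phi w (V1 :|: V2) + phibar w V1 V2 <= 1.
Proof.
move=> dV nV; rewrite -subr_ge0 opprD addrA phibar_phi_defect //.
by rewrite divr_ge0 ?addr_ge0 ?cutE_ge0 ?ltW ?vol_gt0.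
Qed.

Definition arc_len (m v : nat) : nat :=
  if (m < v)%N then (v - m)%N else (v + N - m)%N.

Lemma arc_len_succ (m u : 'I_N) :
  u != m -> (u.+1 %% N)%N != m -> arc_len m (u.+1 %% N) = (arc_len m u).+1.
Proof.
move=> /eqP um /eqP; rewrite /arc_len.
have {}um : (u : nat) <> m by move=> /val_inj.
have ltu := ltn_ord u; have ltm := ltn_ord m.
case: (ltnP u.+1 N) => hu.
  by rewrite modn_small // => um1; do 2!case: ifP => ?; lia.
have -> : u.+1 = N by lia.
by rewrite modnn ltn0 => _; case: ifP => ?; lia.
Qed.

Definition parity_split (m : 'I_N) (S : {set 'I_N}) :=
  ([set v in S | odd (arc_len m v)], [set v in S | ~~ odd (arc_len m v)]).

Lemma parity_split_disjoint (m : 'I_N) (S : {set 'I_N}) :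
  [disjoint (parity_split m S).1 & (parity_split m S).2].
Proof.
by rewrite -setI_eq0; apply/eqP/setP => x; rewrite !inE; case: odd; rewrite !andbF.
Qed.

Lemma parity_splitU (m : 'I_N) (S : {set 'I_N}) :
  (parity_split m S).1 :|: (parity_split m S).2 = S.
Proof. by apply/setP => x; rewrite !inE -andb_orr orbN andbT. Qed.

(* Consecutive vertices of S both differ from m, so their arc lengths differ by one. *)
Lemma wt_same_parity (m u v : 'I_N) (S : {set 'I_N}) :
  m \notin S -> u \in S -> v \in S ->
  odd (arc_len m u) = odd (arc_len m v) -> wt w u v = 0.
Proof.
have neq_m x : x \in S -> m \notin S -> x != m by move=> xS; apply: contraNneq => <-.
move=> mS uS vS; rewrite /wt; case: eqP => [uv|_].
  rewrite -uv arc_len_succ ?neq_m // ?uv ?neq_m //=.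
  by case: odd.
case: eqP => [vu|//].
rewrite -vu arc_len_succ ?neq_m // ?vu ?neq_m //=.
by case: odd.
Qed.

Lemma cutE_parity_split1 (m : 'I_N) (S : {set 'I_N}) : m \notin S ->
  cutE w (parity_split m S).1 (parity_split m S).1 = 0.
Proof.
move=> mS; apply: big1 => u; rewrite inE => /andP[uS ou].
apply: big1 => v; rewrite inE => /andP[vS ov].
by apply: (wt_same_parity mS uS vS); rewrite ou ov.
Qed.

Lemma cutE_parity_split2 (m : 'I_N) (S : {set 'I_N}) : m \notin S ->
  cutE w (parity_split m S).2 (parity_split m S).2 = 0.
Proof.
move=> mS; apply: big1 => u; rewrite inE => /andP[uS /negbTE ou].
apply: big1 => v; rewrite inE => /andP[vS /negbTE ov].
by apply: (wt_same_parity mS uS vS); rewrite ou ov.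
Qed.

Lemma phi_add_phibar_parity_split (m : 'I_N) (S : {set 'I_N}) :
  m \notin S -> S != set0 ->
  phi w S + phibar w (parity_split m S).1 (parity_split m S).2 = 1.
Proof.
move=> mS nS; apply/eqP; rewrite eq_sym -subr_eq0 opprD addrA.
have US := parity_splitU m S.
rewrite -[in phi w S]US phibar_phi_defect ?parity_split_disjoint ?US //.
by rewrite cutE_parity_split1 // cutE_parity_split2 // addr0 mul0r.
Qed.

Definition bipartition (S : {set 'I_N}) : {set 'I_N} * {set 'I_N} :=
  if [pick m in ~: S] is Some m then parity_split m S else (S, set0).

Lemma bipartition_disjoint (S : {set 'I_N}) :
  [disjoint (bipartition S).1 & (bipartition S).2].
Proof.
rewrite /bipartition; case: pickP => [m _|_]; first exact: parity_split_disjoint.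
by rewrite -setI_eq0 setI0.
Qed.

Lemma bipartitionU (S : {set 'I_N}) : (bipartition S).1 :|: (bipartition S).2 = S.
Proof.
by rewrite /bipartition; case: pickP => [m _|_]; rewrite ?parity_splitU ?setU0.
Qed.

Lemma phi_add_phibar_bipartition (S : {set 'I_N}) :
  S != setT -> S != set0 ->
  phi w S + phibar w (bipartition S).1 (bipartition S).2 = 1.
Proof.
move=> nT nS; rewrite /bipartition; case: pickP => [m|S_full].
  by rewrite inE => mS; apply: phi_add_phibar_parity_split.
by case/eqP: nT; apply/setP => x; have := S_full x; rewrite !inE; case: (x \in S).
Qed.

Lemma admissible_neqT k (S : {ffun 'I_k -> {set 'I_N}}) i :
  (1 < k)%N -> admissible S -> S i != setT.
Proof.
move=> k_gt1 /andP[/forallP nS /forallP djS].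
have [j ij] : exists j : 'I_k, i != j.
  case: (eqVneq (val i) 0) => i0.
    by exists (Ordinal k_gt1); apply/eqP => /(congr1 val); rewrite i0.
  by exists (Ordinal (ltnW k_gt1)); apply: contra_neq i0 => ->.
apply: contra (nS j) => /eqP STi; have := forallP (djS i) j.
by rewrite ij STi /= -setI_eq0 setTI.
Qed.

Lemma h_add_hbar_le1 k : h w k + hbar w k <= 1.
Proof.
apply: bigmin_add_bigmax_le1 => P /andP[/andP[/forallP dP /forallP nP] /forallP djP].
exists [ffun i => (P i).1 :|: (P i).2].
  apply/andP; split; apply/forallP => i; rewrite ffunE ?nP //.
  by apply/forallP => j; rewrite ffunE; apply: (forallP (djP i) j).
by apply: bigmax_add_bigmin_le1 => i; rewrite ffunE phi_add_phibar_le1 ?dP ?nP.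
Qed.

Lemma h_add_hbar_ge1 k : (1 < k)%N -> 1 <= h w k + hbar w k.
Proof.
move=> k_gt1; apply: bigmin_add_bigmax_ge1 => S adS.
have /andP[/forallP nS /forallP djS] := adS.
exists [ffun i => bipartition (S i)].
  apply/andP; split; first (apply/andP; split); apply/forallP => i; rewrite ffunE.
  - exact: bipartition_disjoint.
  - by rewrite bipartitionU.
  - by apply/forallP => j; rewrite ffunE !bipartitionU; apply: (forallP (djS i) j).
apply: bigmax_add_bigmin_ge1 => i.
by rewrite ffunE phi_add_phibar_bipartition ?admissible_neqT ?nS.
Qed.

End WeightedCycle.

Theorem proposition7p2 (R : realFieldType) (N : nat) (w : 'I_N -> R) :
  (3 <= N)%N -> odd N -> (forall i, 0 < w i) ->
  forall k : nat, (2 <= k <= N)%N -> h w k + hbar w k = 1.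
Proof.
move=> N_ge3 _ w_gt0 k /andP[k_ge2 _].
by apply/eqP; rewrite eq_le h_add_hbar_le1 // h_add_hbar_ge1.
Qed.
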